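(* Let $\{\mu_n\}$ and $\mu$ be Borel probability measures on $\mathbb R^s$ with compact supports, and suppose $\mu_n\to\mu$ weakly. If $\mathcal Z(\mu)=\emptyset$, then $\{\mu_n\}$ has a subsequence $\{\mu_{n_k}\}$ that is an equi-positive family, i.e., there is $\epsilon_0>0$ such that for every $x\in[0,1)^s$ and every $k$ there exists $m\in\mathbb Z^s$ with $|\widehat{\mu_{n_k}}(x+m)|>\epsilon_0$.
   Context: $\widehat\mu(\xi)=\int e^{2\pi i\langle x,\xi\rangle}d\mu(x)$, and $\mathcal Z(\mu)=\{\xi\in[0,1)^s:\widehat\mu(\xi+k)=0\text{ for all }k\in\mathbb Z^s\}$. Weak convergence means $\int f\,d\mu_n\to\int f\,d\mu$ for all continuous compactly supported $f$. *)

From HB Require Import structures.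
From mathcomp Require Import all_boot all_order all_algebra.
From mathcomp Require Import all_classical all_reals all_analysis.
Set Implicit Arguments. Unset Strict Implicit. Unset Printing Implicit Defensive.
Import Order.TTheory GRing.Theory Num.Theory.
Import numFieldNormedType.Exports.
Local Open Scope classical_set_scope.
Local Open Scope ring_scope.

Definition borelRs (R : realType) (s : nat) :=
  g_sigma_algebraType (open : set (set 'rV[R]_s)).

Definition dotv (R : realType) (s : nat) (x xi : 'rV[R]_s) : R :=
  \sum_(i < s) x ord0 i * xi ord0 i.

(* Real and imaginary parts of  \hat mu (xi) = \int e^{2 pi i <x,xi>} d mu(x) *)
Definition ft_re (R : realType) (s : nat)
  (mu : {measure set (borelRs R s) -> \bar R}) (xi : 'rV[R]_s) : R :=
  Rintegral mu setT (fun x : borelRs R s => cos (2 * pi * dotv x xi)).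

Definition ft_im (R : realType) (s : nat)
  (mu : {measure set (borelRs R s) -> \bar R}) (xi : 'rV[R]_s) : R :=
  Rintegral mu setT (fun x : borelRs R s => sin (2 * pi * dotv x xi)).

Definition ft_abs (R : realType) (s : nat)
  (mu : {measure set (borelRs R s) -> \bar R}) (xi : 'rV[R]_s) : R :=
  Num.sqrt (ft_re mu xi ^+ 2 + ft_im mu xi ^+ 2).

Definition intvec (R : realType) (s : nat) (k : 'rV[int]_s) : 'rV[R]_s :=
  map_mx (fun z : int => z%:~R) k.

Definition unit_cube (R : realType) (s : nat) : set 'rV[R]_s :=
  [set x | forall i : 'I_s, 0 <= x ord0 i < 1].

Definition zero_set (R : realType) (s : nat)
  (mu : {measure set (borelRs R s) -> \bar R}) : set 'rV[R]_s :=
  [set xi | @unit_cube R s xi /\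
            forall k : 'rV[int]_s, ft_abs mu (xi + @intvec R s k) = 0].

Definition compact_support (R : realType) (s : nat)
  (mu : {measure set (borelRs R s) -> \bar R}) : Prop :=
  exists K : set 'rV[R]_s, compact K /\ mu (~` K) = 0%E.

Definition weak_cvg (R : realType) (s : nat)
  (mu_ : nat -> {measure set (borelRs R s) -> \bar R})
  (mu : {measure set (borelRs R s) -> \bar R}) : Prop :=
  forall f : 'rV[R]_s -> R, continuous f ->
    (exists K : set 'rV[R]_s, compact K /\ (forall x, ~ K x -> f x = 0)) ->
    (fun n => Rintegral (mu_ n) setT (f : borelRs R s -> R)) @ \oo
      --> Rintegral mu setT (f : borelRs R s -> R).

From HB Require Import structures.
From mathcomp Require Import all_boot all_order all_algebra.
From mathcomp Require Import all_classical all_reals all_analysis.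
From mathcomp Require Import ring lra.
Import Order.TTheory GRing.Theory Num.Theory.
Import numFieldNormedType.Exports.
Local Open Scope classical_set_scope.
Local Open Scope ring_scope.

(* Let G x := sup_m |\hat mu (x + m)| over m in Z^s.  Truncating the Fourier
   integrals by a continuous cutoff equal to 1 on a ball containing the support
   of mu makes them Lipschitz in the frequency, uniformly in the measure; hence
   G is continuous, positive since Z(mu) is empty, and bounded below by some
   e > 0 on the compact cube [0,1]^s.  At the finitely many points of a grid
   of mesh 1/N choose shifts m with |\hat mu (x + m)| > e.  By weak convergence
   the truncated transforms of mu_n exceed e/2 at these points and the mass of
   mu_n outside the cutoff becomes small for n large; the Lipschitz bound then
   transfers the estimate to every x, so a tail of (mu_n) is equi-positive. *)

Lemma klipschitz_continuous (R : realFieldType) (V W : normedModType R)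
    (k : R) (f : V -> W) :
  k.-lipschitz f -> continuous f.
Proof.
move=> fk x; apply/cvgrPdist_lt => e e0.
have k1 : 0 < `|k| + 1 by rewrite ltr_wpDl.
near=> y.
have := fk (x, y) (conj I I) => /= /le_lt_trans; apply.
apply: (le_lt_trans (y := (`|k| + 1) * `|x - y|)).
  by rewrite ler_wpM2r // (le_trans (ler_norm k)) // lerDl.
by rewrite mulrC -ltr_pdivlMr //; near: y; apply: cvgr_dist_lt; rewrite ?divr_gt0.
Unshelve. all: by end_near.
Qed.

Definition hypot {R : rcfType} (a b : R) : R := Num.sqrt (a ^+ 2 + b ^+ 2).

Lemma hypot_le {R : rcfType} (a b c d : R) :
  hypot a b <= hypot c d + (`|a - c| + `|b - d|).
Proof.
have nK (y : R) : `|y| ^+ 2 = y ^+ 2 := real_normK (num_real y).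
have S0 : 0 <= hypot c d := sqrtr_ge0 _.
have cS : `|c| <= hypot c d by rewrite -(sqrtr_sqr c) ler_wsqrtr // lerDl sqr_ge0.
have dS : `|d| <= hypot c d by rewrite -(sqrtr_sqr d) ler_wsqrtr // lerDr sqr_ge0.
have SS : hypot c d ^+ 2 = `|c| ^+ 2 + `|d| ^+ 2.
  by rewrite !nK sqr_sqrtr // addr_ge0 // sqr_ge0.
have ac : `|a| <= `|c| + `|a - c| by rewrite addrC -{1}(subrK c a) ler_normD.
have bd : `|b| <= `|d| + `|b - d| by rewrite addrC -{1}(subrK d b) ler_normD.
apply: le_trans (ler_wsqrtr (_ : _ <= (hypot c d + (`|a - c| + `|b - d|)) ^+ 2)) _.
  rewrite -(nK a) -(nK b).
  have := normr_ge0 a; have := normr_ge0 b; have := normr_ge0 c; have := normr_ge0 d.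
  have := normr_ge0 (a - c); have := normr_ge0 (b - d); nra.
by rewrite sqrtr_sqr ger0_norm // !addr_ge0.
Qed.

Section probability_Rintegral.
Context {d} {T : measurableType d} {R : realType} (nu : probability T R).

Lemma bounded_integrable (g : T -> R) (M : R) :
  measurable_fun setT g -> (forall x, `|g x| <= M) ->
  nu.-integrable setT (EFin \o g).
Proof.
move=> mg gM; apply: measurable_bounded_integrable => //.
  by rewrite [X in (X < _)%E](_ : _ = 1%E) ?ltry //; exact: probability_setT.
exists M; split; first by rewrite ger0_real // (le_trans _ (gM point)).
by move=> y My x _; exact: le_trans (gM x) (ltW My).
Qed.

Lemma Rintegral_prob_cst (c : R) : Rintegral nu setT (fun=> c) = c.
Proof. by rewrite Rintegral_cst // (congr1 fine (probability_setT nu)) mulr1. Qed.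

Lemma ler_Rintegral_dist (g h k : T -> R) :
  nu.-integrable setT (EFin \o g) -> nu.-integrable setT (EFin \o h) ->
  nu.-integrable setT (EFin \o k) -> (forall x, `|g x - h x| <= k x) ->
  `|Rintegral nu setT g - Rintegral nu setT h| <= Rintegral nu setT k.
Proof.
move=> ig ih ik ghk; have igh := integrableB measurableT ig ih.
rewrite -RintegralB //; apply: le_trans (le_normr_Rintegral _ igh) _ => //.
by apply: le_Rintegral => //; exact: integrable_norm.
Qed.

End probability_Rintegral.

Section row_space.
Context {R : realType} {s : nat}.
Notation V := 'rV[R]_s.
Notation T := (borelRs R s).

Lemma continuous_borel_measurable (g : V -> R) :
  continuous g -> measurable_fun setT (g : T -> R).
Proof.
move=> cg; apply: (measurability _ (measurable_realfun.RGenOpens.measurableE R)).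
move=> _ [_ [a [b ->]] <-]; rewrite setTI.
by apply: sub_sigma_algebra; apply: (proj1 (continuousP g) cg); exact: interval_open.
Qed.

Lemma normr_coord_le (x : V) i : `|x ord0 i| <= `|x|.
Proof.
rewrite [`|x|]mx_normrE.
exact: (le_bigmax _ (fun ij : 'I_1 * 'I_s => `|x ij.1 ij.2|) (ord0, i)).
Qed.

Lemma normr_le_coord (x : V) c :
  0 <= c -> (forall i, `|x ord0 i| <= c) -> `|x| <= c.
Proof.
move=> c0 xc; rewrite [`|x|]mx_normrE; apply/bigmax_leP; split => // -[a i] _ /=.
by rewrite (ord1 a) xc.
Qed.

Lemma dotvBl (x y xi : V) : dotv (x - y) xi = dotv x xi - dotv y xi.
Proof. by rewrite /dotv -sumrB; apply: eq_bigr => i _; rewrite !mxE mulrBl. Qed.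

Lemma dotvBr (x xi eta : V) : dotv x (xi - eta) = dotv x xi - dotv x eta.
Proof. by rewrite /dotv -sumrB; apply: eq_bigr => i _; rewrite !mxE mulrBr. Qed.

Lemma normr_dotv_le (x xi : V) : `|dotv x xi| <= s%:R * (`|x| * `|xi|).
Proof.
rewrite /dotv; apply: le_trans (ler_norm_sum _ _ _) _.
have -> : s%:R * (`|x| * `|xi|) = \sum_(i < s) (`|x| * `|xi|).
  by rewrite sumr_const card_ord mulr_natl.
by apply: ler_sum => i _; rewrite normrM ler_pM // normr_coord_le.
Qed.

Definition trig (b : bool) : R -> R := if b then cos else sin.

Lemma normr_trig_le1 b x : `|trig b x| <= 1.
Proof. by case: b; [exact: cos_max | exact: sin_max]. Qed.

Lemma ler_dist_trig b x y : `|trig b x - trig b y| <= `|x - y|.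
Proof.
wlog xy : x y / y <= x.
  by move=> W; case: (leP y x) => [/W//|/ltW/W]; rewrite distrC [`|y - x|]distrC.
case: b => /=.
  have [c _ ->] := MVT_segment xy (fun z _ => is_derive_cos z)
     (continuous_subspaceT (@continuous_cos R)).
  by rewrite normrM normrN ler_piMl ?sin_max.
have [c _ ->] := MVT_segment xy (fun z _ => is_derive_sin z)
   (continuous_subspaceT (@continuous_sin R)).
by rewrite normrM ler_piMl ?cos_max.
Qed.

Definition fker (b : bool) (xi x : V) : R := trig b (2 * pi * dotv x xi).

Lemma normr_fker_le1 b xi x : `|fker b xi x| <= 1.
Proof. exact: normr_trig_le1. Qed.

Lemma fker_continuous b xi : continuous (fker b xi).
Proof.
apply: (@klipschitz_continuous _ _ _ (2 * pi * (s%:R * `|xi|))) => -[x y] _ /=.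
apply: le_trans (ler_dist_trig _ _ _) _.
have pi2_ge0 : 0 <= 2 * pi :> R by rewrite mulr_ge0 ?pi_ge0.
rewrite -mulrBr -dotvBl normrM (ger0_norm pi2_ge0).
have -> : 2 * pi * (s%:R * `|xi|) * `|x - y| =
  2 * pi * (s%:R * (`|x - y| * `|xi|)) by ring.
by apply: ler_wpM2l => //; apply: normr_dotv_le.
Qed.

Definition cutoff (r : R) (x : V) : R := Num.min 1 (Num.max 0 (r + 1 - `|x|)).

Lemma cutoff_continuous r : continuous (cutoff r).
Proof.
move=> x; apply: (@continuous_min _ _ (cst 1) (fun y => Num.max 0 (r + 1 - `|y|))).
  exact: cst_continuous.
apply: (@continuous_max _ _ (cst 0) (fun y => r + 1 - `|y|)); first exact: cst_continuous.
by apply: continuousB; [exact: cst_continuous | exact: norm_continuous].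
Qed.

Lemma cutoff_ge0 r x : 0 <= cutoff r x.
Proof. by rewrite le_min ler01 le_max lexx. Qed.

Lemma cutoff_le1 r x : cutoff r x <= 1.
Proof. by rewrite ge_min lexx. Qed.

Lemma normr_cutoff_le1 r x : `|cutoff r x| <= 1.
Proof. by rewrite ger0_norm ?cutoff_ge0 ?cutoff_le1. Qed.

Lemma cutoff_eq1 r x : `|x| <= r -> cutoff r x = 1.
Proof. by move=> xr; rewrite /cutoff min_l // le_max; apply/orP; right; lra. Qed.

Lemma cutoff_eq0 r x : r + 1 <= `|x| -> cutoff r x = 0.
Proof. by move=> xr; rewrite /cutoff max_l ?min_r //; lra. Qed.

Lemma cutoffM_normr_le r x : 0 <= r -> cutoff r x * `|x| <= r + 1.
Proof.
move=> r0; have [xr|xr] := leP (r + 1) `|x|; first by rewrite cutoff_eq0 // mul0r; lra.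
by rewrite -[r + 1]mul1r ler_pM ?cutoff_ge0 ?cutoff_le1 // ltW.
Qed.

Lemma cutoff_compact_support r :
  exists K : set V, compact K /\ (forall x, ~ K x -> cutoff r x = 0).
Proof.
exists (closed_ball_ (@Num.Def.normr _ _) (0 : V) (r + 1)); split.
  apply: bounded_closed_compact; last exact: closed_closed_ball_.
  exists (r + 1); split; first exact: num_real.
  move=> M rM x; rewrite /closed_ball_ /= sub0r normrN.
  by move=> /le_trans; apply; rewrite ltW.
move=> x; rewrite /closed_ball_ /= sub0r normrN => /negP; rewrite -ltNge.
by move/ltW; exact: cutoff_eq0.
Qed.

Lemma intvecB (m k : 'rV[int]_s) : intvec R (m - k) = intvec R m - intvec R k.
Proof. by apply/rowP => i; rewrite !mxE intrB. Qed.

Definition grid_pt {N : nat} (j : {ffun 'I_s -> 'I_N}) : V := \row_i ((j i)%:R / N%:R).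

Lemma grid_pt_unit_cube {N} (j : {ffun 'I_s -> 'I_N}) : unit_cube (grid_pt j).
Proof.
move=> i; have N0 : (0 < N)%N := leq_ltn_trans (leq0n _) (ltn_ord (j i)).
by rewrite mxE divr_ge0 //= ltr_pdivrMr ?ltr0n // mul1r ltr_nat.
Qed.

Lemma grid_pt_approx N x : (0 < N)%N -> unit_cube x ->
  exists j : {ffun 'I_s -> 'I_N}, `|x - grid_pt j| <= N%:R^-1.
Proof.
move=> N0 x01; have N0R : 0 < N%:R :> R by rewrite ltr0n.
have xN_ge0 i : 0 <= x ord0 i * N%:R.
  by have /andP[x0 _] := x01 i; exact: mulr_ge0 x0 (ltW N0R).
have xN_lt i : (Num.truncn (x ord0 i * N%:R) < N)%N.
  by rewrite truncn_lt_nat // -[ltRHS]mul1r ltr_pM2r //; case/andP: (x01 i).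
exists [ffun i => Ordinal (xN_lt i)].
apply: normr_le_coord => [|i]; first by rewrite invr_ge0 ltW.
rewrite !mxE ffunE /=; have /andP[t_le t_gt] := truncn_itv (xN_ge0 i).
rewrite -natr1 in t_gt; move: t_le t_gt; set t := Num.truncn _ => t_le t_gt.
have -> : x ord0 i - t%:R / N%:R = (x ord0 i * N%:R - t%:R) / N%:R.
  by field; rewrite gt_eqF.
rewrite normrM normfV (ger0_norm (ltW N0R)) ler_pdivrMr // mulVf ?gt_eqF //.
rewrite ler_norml; apply/andP; split; lra.
Qed.

End row_space.

Section fourier_transform.
Variables (R : realType) (s : nat).
Notation V := 'rV[R]_s.
Notation T := (borelRs R s).
Implicit Types (nu : probability T R) (b : bool) (r : R) (xi eta : V).

Lemma continuous_bounded_integrable nu (f : V -> R) M :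
  continuous f -> (forall x, `|f x| <= M) ->
  nu.-integrable setT (EFin \o (f : T -> R)).
Proof.
by move=> cf; apply: (bounded_integrable nu _ M (continuous_borel_measurable f cf)).
Qed.

Definition ft b nu xi : R := Rintegral nu setT (fker b xi : T -> R).

(* Unlike [ft], the truncated transform is Lipschitz in [xi] uniformly in [nu]. *)
Definition tft r b nu xi : R :=
  Rintegral nu setT ((fun x => cutoff r x * fker b xi x) : T -> R).

Definition tft_abs r nu xi : R := hypot (tft r true nu xi) (tft r false nu xi).

Definition cutoff_mass r nu : R := Rintegral nu setT (cutoff r : T -> R).

Definition tft_lipconst r : R := 2 * pi * s%:R * (r + 1).

Lemma ft_absE nu xi : ft_abs nu xi = hypot (ft true nu xi) (ft false nu xi).
Proof. by []. Qed.

Lemma cutoff_fker_continuous r b xi : continuous (fun x => cutoff r x * fker b xi x).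
Proof.
by move=> x; apply: continuousM; [exact: cutoff_continuous | exact: fker_continuous].
Qed.

Lemma normr_cutoff_fker_le1 r b xi x : `|cutoff r x * fker b xi x| <= 1.
Proof. by rewrite normrM -[1]mulr1 ler_pM ?normr_cutoff_le1 ?normr_fker_le1. Qed.

Lemma cutoffC_integrable r nu :
  nu.-integrable setT (EFin \o ((fun x => 1 - cutoff r x) : T -> R)).
Proof.
apply: (continuous_bounded_integrable nu _ 1).
  by move=> x; apply: continuousB; [exact: cst_continuous | exact: cutoff_continuous].
by move=> x; have := cutoff_ge0 r x; have := cutoff_le1 r x; rewrite ler_norml; lra.
Qed.

Lemma cutoff_massC r nu :
  1 - cutoff_mass r nu = Rintegral nu setT ((fun x => 1 - cutoff r x) : T -> R).
Proof.
rewrite RintegralB ?Rintegral_prob_cst //; first exact: finite_measure_integrable_cst.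
exact: continuous_bounded_integrable (@cutoff_continuous _ _ r) (normr_cutoff_le1 r).
Qed.

Lemma dist_ft_tft r b nu xi : `|ft b nu xi - tft r b nu xi| <= 1 - cutoff_mass r nu.
Proof.
rewrite cutoff_massC; apply: ler_Rintegral_dist.
- exact: continuous_bounded_integrable (fker_continuous b xi) (normr_fker_le1 b xi).
- exact: continuous_bounded_integrable (cutoff_fker_continuous r b xi)
    (normr_cutoff_fker_le1 r b xi).
- exact: cutoffC_integrable.
move=> x; rewrite -{1}[fker b xi x]mul1r -mulrBl normrM.
rewrite ger0_norm ?subr_ge0 ?cutoff_le1 // ler_piMr ?subr_ge0 ?cutoff_le1 //.
exact: normr_fker_le1.
Qed.

Lemma dist_tft r b nu xi eta :
  0 <= r -> `|tft r b nu xi - tft r b nu eta| <= tft_lipconst r * `|xi - eta|.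
Proof.
move=> r0; have pi2_ge0 : 0 <= 2 * pi :> R by rewrite mulr_ge0 ?pi_ge0.
rewrite -[leRHS](Rintegral_prob_cst nu); apply: ler_Rintegral_dist.
- exact: continuous_bounded_integrable (cutoff_fker_continuous r b xi)
    (normr_cutoff_fker_le1 r b xi).
- exact: continuous_bounded_integrable (cutoff_fker_continuous r b eta)
    (normr_cutoff_fker_le1 r b eta).
- exact: finite_measure_integrable_cst.
move=> x; rewrite -mulrBr normrM (ger0_norm (cutoff_ge0 r x)).
apply: le_trans (ler_wpM2l (cutoff_ge0 r x) (ler_dist_trig b _ _)) _.
rewrite -mulrBr -dotvBr normrM (ger0_norm pi2_ge0).
apply: le_trans (ler_wpM2l (cutoff_ge0 r x)
  (ler_wpM2l pi2_ge0 (normr_dotv_le x (xi - eta)))) _.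
have -> : cutoff r x * (2 * pi * (s%:R * (`|x| * `|xi - eta|))) =
  2 * pi * s%:R * `|xi - eta| * (cutoff r x * `|x|) by ring.
rewrite /tft_lipconst [leRHS]mulrAC ler_wpM2l ?cutoffM_normr_le //.
by rewrite !mulr_ge0 ?pi_ge0.
Qed.

Lemma tft_abs_lipschitz r nu xi eta : 0 <= r ->
  tft_abs r nu xi <= tft_abs r nu eta + 2 * tft_lipconst r * `|xi - eta|.
Proof.
move=> r0; apply: le_trans (hypot_le _ _ (tft r true nu eta) (tft r false nu eta)) _.
rewrite /tft_abs; have := dist_tft r true nu xi eta r0.
have := dist_tft r false nu xi eta r0; lra.
Qed.

Lemma tft_abs_le_ft_abs r nu xi :
  tft_abs r nu xi <= ft_abs nu xi + 2 * (1 - cutoff_mass r nu).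
Proof.
apply: le_trans (hypot_le _ _ (ft true nu xi) (ft false nu xi)) _.
have := dist_ft_tft r true nu xi; have := dist_ft_tft r false nu xi.
rewrite ft_absE !(distrC (tft _ _ _ _)); lra.
Qed.

Lemma ft_abs_tft_abs r nu xi : cutoff_mass r nu = 1 -> ft_abs nu xi = tft_abs r nu xi.
Proof.
move=> mass1; have ft_tft b : ft b nu xi = tft r b nu xi.
  by apply/eqP; rewrite -subr_eq0 -normr_le0 -(subrr 1) -[X in 1 - X]mass1 dist_ft_tft.
by rewrite ft_absE /tft_abs !ft_tft.
Qed.

Lemma ft_abs_lipschitz r nu xi eta : 0 <= r -> cutoff_mass r nu = 1 ->
  ft_abs nu xi <= ft_abs nu eta + 2 * tft_lipconst r * `|xi - eta|.
Proof. by move=> r0 mass1; rewrite !(ft_abs_tft_abs _ _ _ mass1) tft_abs_lipschitz. Qed.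

Lemma ft_abs_le2 nu xi : ft_abs nu xi <= 2.
Proof.
have normr_ft_le1 b : `|ft b nu xi| <= 1.
  rewrite -[ft b nu xi]subr0 -(Rintegral_prob_cst nu 0) -(Rintegral_prob_cst nu 1).
  apply: ler_Rintegral_dist => [||| x]; last by rewrite subr0 normr_fker_le1.
  - exact: continuous_bounded_integrable (fker_continuous b xi) (normr_fker_le1 b xi).
  - exact: finite_measure_integrable_cst.
  - exact: finite_measure_integrable_cst.
apply: le_trans (hypot_le _ _ 0 0) _.
rewrite /hypot expr0n /= addr0 sqrtr0 add0r !subr0.
have := normr_ft_le1 true; have := normr_ft_le1 false; lra.
Qed.

Lemma cutoff_mass_eq1 r nu (K : set V) : compact K -> nu (~` K) = 0%E ->
  (forall x, K x -> `|x| <= r) -> cutoff_mass r nu = 1.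
Proof.
move=> cK nuK Kr; suff : 1 - cutoff_mass r nu = 0 by move=> h; lra.
have mKC : measurable (~` K : set T).
  apply: sub_sigma_algebra; apply: closed_openC.
  by apply: compact_closed => //; exact: hausdorff_normedModType.
apply/eqP; rewrite eq_le cutoff_massC; apply/andP; split; last first.
  by apply: Rintegral_ge0 => x _; rewrite subr_ge0 cutoff_le1.
have -> : 0 = Rintegral nu setT (\1_(~` K) : T -> R).
  by rewrite /Rintegral integral_indic //= setIT nuK.
apply: le_Rintegral => //; [exact: cutoffC_integrable | exact: integrable_indic |].
move=> x _ /=; have [xK|xK] := pselect (K x).
  by rewrite cutoff_eq1 ?Kr // subrr.
by rewrite mem_set // lerBlDr lerDl cutoff_ge0.
Qed.

Definition ft_sup nu x : R :=
  sup (range (fun m : 'rV[int]_s => ft_abs nu (x + intvec R m))).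

Lemma ft_sup_ge nu x m : ft_abs nu (x + intvec R m) <= ft_sup nu x.
Proof.
apply: ub_le_sup; last by exists m.
by exists 2 => _ [k _ <-]; exact: ft_abs_le2.
Qed.

Lemma ft_sup_gt nu x e : e < ft_sup nu x -> exists m, e < ft_abs nu (x + intvec R m).
Proof.
by case/sup_gt => [|_ [m _ <-]]; [exists (ft_abs nu (x + intvec R 0)), 0 | exists m].
Qed.

Lemma ft_sup_lipschitz r nu x y : 0 <= r -> cutoff_mass r nu = 1 ->
  ft_sup nu x <= ft_sup nu y + 2 * tft_lipconst r * `|x - y|.
Proof.
move=> r0 mass1; apply: ge_sup; first by exists (ft_abs nu (x + intvec R 0)), 0.
move=> _ [m _ <-]; apply: le_trans (ft_abs_lipschitz _ _ _ (y + intvec R m) r0 mass1) _.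
by rewrite opprD addrACA subrr addr0 lerD2r ft_sup_ge.
Qed.

Lemma ft_sup_continuous r nu : 0 <= r -> cutoff_mass r nu = 1 -> continuous (ft_sup nu).
Proof.
move=> r0 mass1.
apply: (@klipschitz_continuous _ _ _ (2 * tft_lipconst r)) => -[x y] _ /=.
have := ft_sup_lipschitz _ _ x y r0 mass1; have := ft_sup_lipschitz _ _ y x r0 mass1.
by rewrite distrC ler_norml => *; apply/andP; split; lra.
Qed.

(* Translated by its floor, [x] lands in [[0, 1)^s], where [Z(nu)] is empty. *)
Lemma ft_sup_gt0 nu x : zero_set nu = set0 -> 0 < ft_sup nu x.
Proof.
move=> Z0; pose k : 'rV[int]_s := \row_i Num.floor (x ord0 i).
have : ~ zero_set nu (x - intvec R k) by rewrite Z0.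
case/not_andP => [|/existsNP[m ft_neq0]].
  case=> i; rewrite !mxE; have := floor_le (x ord0 i).
  by have := floorD1_gt (x ord0 i); rewrite intrD => *; apply/andP; split; lra.
apply: lt_le_trans (ft_sup_ge nu x (m - k)).
rewrite intvecB addrA addrAC lt_neqAle eq_sym.
by apply/andP; split; [apply/eqP | exact: sqrtr_ge0].
Qed.

Lemma ft_abs_periodic_lower_bound r nu :
  0 <= r -> cutoff_mass r nu = 1 -> zero_set nu = set0 ->
  exists2 e, 0 < e & forall x, unit_cube x -> exists m, e < ft_abs nu (x + intvec R m).
Proof.
move=> r0 mass1 Z0; pose cube := [set x : V | forall i, `[0, 1]%classic (x ord0 i)].
have cube_compact : compact cube := rV_compact (fun=> @segment_compact R 0 1).
have [||c _ c_min] := compact_EVT_min _ cube_compact (f := ft_sup nu).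
- by exists 0 => i; rewrite /= in_itv /= mxE lexx ler01.
- by apply: continuous_subspaceT; exact: ft_sup_continuous r0 mass1.
exists (ft_sup nu c / 2); first by rewrite divr_gt0 ?(ft_sup_gt0 _ _ Z0).
move=> x x01; apply: ft_sup_gt; apply: (@lt_le_trans _ _ (ft_sup nu c)).
  by have := ft_sup_gt0 _ c Z0; lra.
apply: c_min; rewrite inE => i; have /andP[x0 x1] := x01 i.
by rewrite /= in_itv /= x0 ltW.
Qed.

Section weak_limit.
Variables (mu_ : nat -> probability T R) (mu : probability T R).
Hypothesis mu_weak : weak_cvg (fun n => (mu_ n : {measure set T -> \bar R})) mu.

Lemma weak_cvg_tft r b xi : tft r b (mu_ n) xi @[n --> \oo] --> tft r b mu xi.
Proof.
have [K [cK K0]] := cutoff_compact_support (s := s) r.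
have supp : exists K, compact K /\ forall x, ~ K x -> cutoff r x * fker b xi x = 0.
  by exists K; split => // x /K0 ->; rewrite mul0r.
exact: (mu_weak _ (cutoff_fker_continuous r b xi) supp).
Qed.

Lemma weak_cvg_cutoff_mass r : cutoff_mass r (mu_ n) @[n --> \oo] --> cutoff_mass r mu.
Proof.
exact: (mu_weak _ (@cutoff_continuous _ _ r) (cutoff_compact_support (s := s) r)).
Qed.

Lemma weak_cvg_tft_abs r xi : tft_abs r (mu_ n) xi @[n --> \oo] --> tft_abs r mu xi.
Proof.
have sq b : tft r b (mu_ n) xi ^+ 2 @[n --> \oo] --> tft r b mu xi ^+ 2.
  exact: (cvgM (weak_cvg_tft r b xi) (weak_cvg_tft r b xi)).
rewrite /tft_abs /hypot.
exact: (cvg_comp _ _ (cvgD (sq true) (sq false)) (@sqrt_continuous R _)).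
Qed.

Lemma eventually_equipositive : compact_support mu -> zero_set mu = set0 ->
  exists2 e, 0 < e & \forall n \near \oo,
    forall x, unit_cube x -> exists m, e < ft_abs (mu_ n) (x + intvec R m).
Proof.
move=> [K [cK muK]] Z0.
have [r [r0 Kr]] : exists r, 0 <= r /\ forall x, K x -> `|x| <= r.
  have [M [Mreal MK]] := compact_bounded cK.
  exists (`|M| + 1); split => [|x Kx]; first by rewrite addr_ge0.
  by apply: MK Kx; rewrite (le_lt_trans (real_ler_norm Mreal)) // ltrDl.
have mass1 := cutoff_mass_eq1 _ _ _ cK muK Kr.
have [e e0 He] := ft_abs_periodic_lower_bound _ _ r0 mass1 Z0.
have C0 : 0 <= tft_lipconst r by rewrite /tft_lipconst !mulr_ge0 ?pi_ge0 //; lra.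
pose N := (Num.truncn (16 * tft_lipconst r / e)).+1.
have N0 : 0 < N%:R :> R by rewrite ltr0n.
have CN : 2 * tft_lipconst r / N%:R <= e / 8.
  have := truncnS_gt (16 * tft_lipconst r / e); rewrite -/N ltr_pdivrMr // => CN.
  by rewrite ler_pdivrMr //; nra.
have /choice[m em] : forall j : {ffun 'I_s -> 'I_N},
    exists m, e < tft_abs r mu (grid_pt j + intvec R m).
  move=> j; have [m em] := He _ (grid_pt_unit_cube j).
  by exists m; rewrite -(ft_abs_tft_abs _ _ _ mass1).
exists (e / 4); first by rewrite divr_gt0.
have near_tft : \forall n \near \oo,
    forall j, e / 2 < tft_abs r (mu_ n) (grid_pt j + intvec R (m j)).
  apply: filter_forall => j.
  move/cvgr_gt: (weak_cvg_tft_abs r (grid_pt j + intvec R (m j))).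
  by apply; have := em j; lra.
have near_mass : \forall n \near \oo, 1 - e / 16 < cutoff_mass r (mu_ n).
  by move/cvgr_gt: (weak_cvg_cutoff_mass r); apply; rewrite mass1; lra.
apply: (filterS2 _ _ near_tft near_mass) => n tft_n mass_n x.
move=> /(grid_pt_approx N x (ltn0Sn _)) [j xj]; exists (m j).
have := tft_abs_le_ft_abs r (mu_ n) (x + intvec R (m j)).
have := tft_abs_lipschitz r (mu_ n) (grid_pt j + intvec R (m j)) (x + intvec R (m j)) r0.
rewrite opprD addrACA subrr addr0 distrC.
have := ler_wpM2l (mulr_ge0 (ler0n _ 2) C0) xj.
by have := tft_n j; lra.
Qed.

End weak_limit.

End fourier_transform.

Theorem lemma3p7 (R : realType) (s : nat)
  (mu_ : nat -> probability (borelRs R s) R) (mu : probability (borelRs R s) R) :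
  (forall n, compact_support (mu_ n)) ->
  compact_support mu ->
  weak_cvg (fun n => (mu_ n : {measure set (borelRs R s) -> \bar R})) mu ->
  zero_set mu = set0 ->
  exists nk : nat -> nat, {homo nk : a b / (a < b)%N >-> (a < b)%N} /\
    exists eps0 : R, 0 < eps0 /\
      forall x : 'rV[R]_s, @unit_cube R s x ->
        forall k : nat, exists m : 'rV[int]_s,
          eps0 < ft_abs (mu_ (nk k)) (x + @intvec R s m).
Proof.
move=> _ mu_cpt mu_weak Z0.
have [e e0 [N _ equipos]] := @eventually_equipositive R s mu_ mu mu_weak mu_cpt Z0.
exists (fun k => (k + N)%N); split; first by move=> a b; rewrite ltn_add2r.
by exists e; split => // x x01 k; apply: equipos (leq_addl _ _) x x01.
Qed.
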